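(* Let $q$ be a power of $2$, $a\in\mathbb{F}_q$, and $n\ge1$ an integer with $\gcd(n+1,q)=1$. Then $n$ is even, and the code $C_n(a)$ is LCD if and only if $$a\notin\{-1+\theta^i+\theta^{-i} : 1\le i\le n/2\},$$ where $\theta\in\overline{\mathbb{F}}_q$ is a primitive $(n+1)$-th root of unity.
   Context: For $a\in\mathbb{F}_q$ and $n \ge 1$, $T_n(a)$ denotes the $n\times n$ symmetric tridiagonal Toeplitz matrix over $\mathbb{F}_q$ with all diagonal entries equal to $a$, all entries on the first super- and sub-diagonals equal to $1$, and all other entries $0$. $C_n(a)$ is the $[2n,n]$ linear code over $\mathbb{F}_q$ with generator matrix $[I_n \mid T_n(a)]$. A linear code $C$ is LCD (linear complementary dual) if $C\cap C^\perp=\{0\}$, where $C^\perp$ is the dual with respect to the standard Euclidean inner product. *)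

From HB Require Import structures.
From mathcomp Require Import all_boot all_order all_algebra all_field.
Set Implicit Arguments.
Unset Strict Implicit.
Unset Printing Implicit Defensive.
Import GRing.Theory.
Local Open Scope ring_scope.

Definition tridiag (F : nzRingType) (n : nat) (a : F) : 'M[F]_n :=
  \matrix_(i < n, j < n)
     if i == j then a
     else if ((i : nat) == j.+1) || ((j : nat) == i.+1) then 1 else 0.

Definition gen_Cn (F : nzRingType) (n : nat) (a : F) : 'M[F]_(n, n + n) :=
  row_mx 1%:M (tridiag n a).

Definition in_code (F : fieldType) (k m : nat) (G : 'M[F]_(k, m)) (x : 'rV[F]_m) : Prop :=
  (x <= G)%MS.

Definition in_dual (F : fieldType) (k m : nat) (G : 'M[F]_(k, m)) (x : 'rV[F]_m) : Prop :=
  forall y : 'rV[F]_m, in_code G y -> x *m y^T = 0.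

Definition is_LCD (F : fieldType) (k m : nat) (G : 'M[F]_(k, m)) : Prop :=
  forall x : 'rV[F]_m, in_code G x -> in_dual G x -> x = 0.

From HB Require Import structures.
From mathcomp Require Import all_boot all_order all_algebra all_field.
From mathcomp Require Import ring zify.
Set Implicit Arguments.
Unset Strict Implicit.
Unset Printing Implicit Defensive.
Import GRing.Theory.
Local Open Scope ring_scope.

(* 1. A code with systematic generator G = [I | T] is LCD iff G G^T = I + T T^T
      is invertible (LCD_systematic).
   2. In characteristic 2, T = T_n(a) is symmetric and I + T^2 = (I + T)^2, and
      I + T_n(a) = T_n(1 + a); so C_n(a) is LCD iff T_n(1 + a) is invertible.
   3. T_n(c) is invertible iff U_(n+1)(-c) <> 0, where U is the Lucas sequence
      U_0 = 0, U_1 = 1, U_(k+2) = c U_(k+1) - U_k: a vector in the left kernel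
      of T_n(c) is determined by its first entry through this recurrence
      (tridiag_unitmx).
   4. For n = 2k, U_(2k+1) = (U_(k+1) - U_k) (U_(k+1) + U_k), which in
      characteristic 2 is the square of W_k = U_(k+1) + U_k (lucasU_double).
   5. If theta is a primitive (2k+1)-th root of unity, the zeros of W_k are
      exactly the k distinct values theta^i + theta^-i, 1 <= i <= k: they are
      zeros because U_j(x + x^-1) (x - x^-1) = x^j - x^-j, and there are no
      others because W_k is a nonzero polynomial of degree k (lucasW_eq0).
   Finally n is even since n + 1 is coprime to #|F| = 2^m. *)

Lemma nat_ind2 (P : nat -> Prop) :
  P 0%N -> P 1%N -> (forall k, P k -> P k.+1 -> P k.+2) -> forall k, P k.
Proof.
move=> P0 P1 IH k; suff: P k /\ P k.+1 by case.
by elim: k => [|k [Pk PSk]]; split=> //; apply: IH.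
Qed.

Fixpoint lucasU (R : nzRingType) (c : R) (k : nat) : R :=
  match k with
  | 0 => 0
  | 1 => 1
  | (k'.+1 as k1).+1 => c * lucasU c k1 - lucasU c k'
  end.

Section Lucas.
Variable R : comNzRingType.
Implicit Types (c x y : R) (k : nat).

Lemma lucasU_SS c k : lucasU c k.+2 = c * lucasU c k.+1 - lucasU c k.
Proof. by []. Qed.

Lemma lucasU_add c m k :
  lucasU c (m + k).+1 = lucasU c m.+1 * lucasU c k.+1 - lucasU c m * lucasU c k.
Proof.
elim/nat_ind2: k => [|| k IHk IHSk]; first by rewrite addn0 /=; ring.
  by rewrite addn1 lucasU_SS /=; ring.
by rewrite addnS lucasU_SS IHSk addnS IHk !lucasU_SS; ring.
Qed.

Lemma lucasU_double c k :
  lucasU c (k + k).+1 = (lucasU c k.+1 - lucasU c k) * (lucasU c k.+1 + lucasU c k).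
Proof. by rewrite lucasU_add; ring. Qed.

Lemma lucasU_sum x y k :
  x * y = 1 -> lucasU (x + y) k * (x - y) = x ^+ k - y ^+ k.
Proof.
move=> xy1; elim/nat_ind2: k => [|| k IHk IHSk]; first by rewrite /= mul0r subrr.
  by rewrite /= mul1r !expr1.
rewrite lucasU_SS mulrBl -mulrA IHk IHSk.
transitivity (x ^+ k.+2 - y ^+ k.+2 + (x * y - 1) * (x ^+ k - y ^+ k)).
  by rewrite !exprS; ring.
by rewrite xy1 subrr mul0r addr0.
Qed.

Lemma lucas_recurrence_sol (w : nat -> R) c n :
  w 0%N = 0 -> (forall j, (j < n)%N -> w j.+2 = c * w j.+1 - w j) ->
  forall k, (k <= n.+1)%N -> w k = w 1%N * lucasU c k.
Proof.
move=> w0 wrec; elim/ltn_ind=> -[|[|k]] IH k_le; first by rewrite w0 mulr0.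
  by rewrite mulr1.
rewrite wrec // (IH k.+1) // 1?ltnW // (IH k) // 2?ltnW // lucasU_SS; ring.
Qed.

End Lucas.

Lemma lucasU_rmorph (R S : comNzRingType) (g : {rmorphism R -> S}) c k :
  g (lucasU c k) = lucasU (g c) k.
Proof.
elim/nat_ind2: k => [|| k IHk IHSk]; rewrite ?rmorph0 ?rmorph1 //.
by rewrite !lucasU_SS rmorphB rmorphM IHk IHSk.
Qed.

(* W_k = U_(k+1) + U_k, so that U_(2k+1) = W_k^2 in characteristic 2. *)
Definition lucasW (R : nzRingType) (c : R) (k : nat) : R :=
  lucasU c k.+1 + lucasU c k.

Section LucasPoly.
Variable R : comNzRingType.
Implicit Types k : nat.

Lemma horner_lucasU (p : {poly R}) x k : (lucasU p k).[x] = lucasU p.[x] k.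
Proof. exact: (lucasU_rmorph (horner_eval x)). Qed.

Lemma size_lucasU_X k : (size (lucasU ('X : {poly R}) k) <= k)%N.
Proof.
elim/nat_ind2: k => [|| k IHk IHSk]; rewrite ?size_poly0 ?size_poly1 //.
rewrite lucasU_SS (leq_trans (size_polyD _ _)) // size_polyN geq_max.
apply/andP; split; last by rewrite (leq_trans IHk) // ltnW.
by rewrite (leq_trans (size_polyMleq _ _)) // size_polyX.
Qed.

Lemma coef_lucasU_X k : (lucasU ('X : {poly R}) k.+1)`_k = 1.
Proof.
elim: k => [|k IHk]; first by rewrite coef1.
rewrite lucasU_SS coefB coefXM /= IHk nth_default ?subr0 //.
exact: leq_trans (size_lucasU_X k) _.
Qed.

Lemma size_lucasW_X k : (size (lucasW ('X : {poly R}) k) <= k.+1)%N.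
Proof.
rewrite (leq_trans (size_polyD _ _)) // geq_max size_lucasU_X.
exact: leq_trans (size_lucasU_X k) _.
Qed.

Lemma lucasW_X_neq0 k : lucasW ('X : {poly R}) k != 0.
Proof.
apply/eqP => /(congr1 (fun p : {poly R} => p`_k)).
rewrite coefD coef_lucasU_X nth_default ?size_lucasU_X // coef0 addr0.
by move/eqP; rewrite oner_eq0.
Qed.

End LucasPoly.

Definition cos_root (L : fieldType) (theta : L) (i : nat) : L :=
  theta ^+ i + theta ^- i.

Section CosRoots.
Variables (L : fieldType) (k : nat) (theta : L).
Hypothesis prim : (k + k).+1.-primitive_root theta.

Lemma theta_expr_neq1 j : (0 < j <= k + k)%N -> theta ^+ j != 1.
Proof.
case/andP=> j_gt0 j_le; rewrite -(prim_order_dvd prim).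
by rewrite gtnNdvd // ltnS.
Qed.

Lemma theta_neq0 : theta != 0.
Proof.
apply/eqP=> theta0; have := prim_expr_order prim.
by rewrite theta0 expr0n => /eqP; rewrite eq_sym oner_eq0.
Qed.

Lemma cos_root_lucasW i : (1 <= i <= k)%N -> lucasW (cos_root theta i) k = 0.
Proof.
case/andP=> i_gt0 i_le.
set x := theta ^+ i; have x_neq0 : x != 0 by rewrite expf_neq0 ?theta_neq0.
have xV : x * x^-1 = 1 by rewrite mulfV.
have x_order : x ^+ k * x ^+ k.+1 = 1.
  by rewrite -exprD addnS -exprM mulnC exprM (prim_expr_order prim) expr1n.
have x_sub_neq0 : x - x^-1 != 0.
  rewrite subr_eq0; apply: contra (theta_expr_neq1 (j := i + i) _) => [/eqP xxV|].
    by rewrite exprD -/x {2}xxV xV.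
  by rewrite addn_gt0 i_gt0 leq_add.
apply/eqP; rewrite -(mulIr_eq0 _ (mulIf x_sub_neq0)) mulrDl.
rewrite /cos_root -/x !(lucasU_sum _ xV) !exprVn.
rewrite (mulr1_eq x_order) (mulr1_eq (etrans (mulrC _ _) x_order)).
by rewrite addrC subrKA subrr.
Qed.

Lemma cos_root_inj i j : (1 <= i <= k)%N -> (1 <= j <= k)%N ->
  cos_root theta i = cos_root theta j -> i = j.
Proof.
case/andP=> i_gt0 i_le; case/andP=> j_gt0 j_le eq_ij.
set x := theta ^+ i; set y := theta ^+ j.
have [x_neq0 y_neq0] : x != 0 /\ y != 0 by rewrite !expf_neq0 ?theta_neq0.
have : (x - y) * (x * y - 1) = 0.
  transitivity (x * y * (cos_root theta i - cos_root theta j)).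
    by rewrite /cos_root -/x -/y; field; apply/andP.
  by rewrite eq_ij subrr mulr0.
move/eqP; rewrite mulf_eq0 !subr_eq0 => /orP[].
  rewrite (eq_prim_root_expr prim) !modn_small ?ltnS ?(leq_trans _ (leq_addl k k)) //.
  exact/eqP.
rewrite -exprD (negbTE (theta_expr_neq1 _)) //.
by rewrite addn_gt0 i_gt0 leq_add.
Qed.

(* Since W_k has degree at most k, these are all its zeros. *)
Lemma lucasW_eq0 c :
  lucasW c k = 0 <-> exists i, [/\ (1 <= i)%N, (i <= k)%N & c = cos_root theta i].
Proof.
split=> [Wc0 | [i [i_gt0 i_le ->]]]; last by apply: cos_root_lucasW; rewrite i_gt0.
pose roots := map (cos_root theta) (iota 1 k).
have [/mapP[i] | c_notin] := boolP (c \in roots).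
  by rewrite mem_iota add1n ltnS => /andP[i_gt0 i_le] ->; exists i.
pose W := lucasW ('X : {poly L}) k.
have W_eval d : W.[d] = lucasW d k.
  by rewrite hornerD !horner_lucasU hornerX.
have roots_uniq : uniq roots.
  rewrite map_inj_in_uniq ?iota_uniq // => i j.
  by rewrite !mem_iota !add1n !ltnS; apply: cos_root_inj.
have roots_W : all (root W) roots.
  apply/allP=> r /mapP[i]; rewrite mem_iota add1n ltnS => i_range ->.
  by rewrite /root W_eval cos_root_lucasW.
have := max_poly_roots (rs := c :: roots) (lucasW_X_neq0 L k).
rewrite /= /root W_eval Wc0 eqxx roots_W c_notin roots_uniq size_map size_iota.
by rewrite ltnNge size_lucasW_X => /(_ isT isT).
Qed.

End CosRoots.

Lemma unitmx_kernel (F : fieldType) (n : nat) (A : 'M[F]_n) :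
  A \in unitmx <-> (forall u : 'rV[F]_n, u *m A = 0 -> u = 0).
Proof.
rewrite -row_free_unit; split=> [freeA u /eqP | /inj_row_free //].
by rewrite mulmx_free_eq0 // => /eqP.
Qed.

Section Tridiagonal.
Variables (F : fieldType) (n : nat).
Implicit Types (c : F) (u : 'rV[F]_n) (k : nat).

(* padded u k = u_(k-1), with u padded by zeros on both sides: the
   coordinates of u *m T_n(c) are c w_(j+1) + w_(j+2) + w_j for w = padded u. *)
Definition padded u k : F := \sum_(i < n | i.+1 == k) u 0 i.

Lemma padded0 k : padded 0 k = 0.
Proof. by rewrite /padded big1 // => i _; rewrite mxE. Qed.

Lemma padded_0 u : padded u 0 = 0.
Proof. by rewrite /padded big_pred0. Qed.

Lemma padded_S u (i : 'I_n) : padded u i.+1 = u 0 i.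
Proof. by rewrite /padded (big_pred1 i) // => j; rewrite /= eqSS. Qed.

Lemma padded_gt u k : (n < k)%N -> padded u k = 0.
Proof.
move=> n_lt_k; rewrite /padded big_pred0 // => i.
by rewrite ltn_eqF // (leq_ltn_trans (ltn_ord i)).
Qed.

Lemma tridiagE c (i j : 'I_n) :
  tridiag n c i j = c * (i == j)%:R + (i == j.+1 :> nat)%:R + (i.+1 == j :> nat)%:R.
Proof.
rewrite mxE; have [->|_] := eqVneq i j.
  by rewrite (gtn_eqF (ltnSn j)) (ltn_eqF (ltnSn j)) mulr1 !addr0.
rewrite mulr0 add0r [(j : nat) == _]eq_sym.
have [-> | _] := eqVneq (i : nat) j.+1; last by rewrite add0r; case: (_ == _).
by rewrite (gtn_eqF (ltnW (ltnSn j.+1))) addr0.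
Qed.

Lemma mul_tridiag c u (j : 'I_n) :
  (u *m tridiag n c) 0 j = c * padded u j.+1 + padded u j.+2 + padded u j.
Proof.
rewrite mxE; under eq_bigr => i _ do rewrite tridiagE !mulrDr mulrCA.
rewrite !big_split -mulr_sumr /padded !(big_mkcond (fun i : 'I_n => _ == _)) /=.
by congr (c * _ + _ + _); apply: eq_bigr => i _; rewrite mulr_natr mulrb.
Qed.

(* T_n(c) is invertible iff U_(n+1)(-c) <> 0: a kernel vector u satisfies
   u_(j-1) = u_0 U_j(-c) for j <= n + 1 (with u_n = 0), so it is zero unless
   U_(n+1)(-c) = 0, in which case (U_1(-c), ..., U_n(-c)) is in the kernel. *)
Lemma tridiag_unitmx c : tridiag n c \in unitmx <-> lucasU (- c) n.+1 != 0.
Proof.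
rewrite unitmx_kernel; split=> [ker0 | U_neq0 u uT0].
  apply/eqP=> U0; pose u := \row_(i < n) lucasU (- c) i.+1.
  have u_padded k : (k <= n.+1)%N -> padded u k = lucasU (- c) k.
    case: k => [_ | k]; first exact: padded_0.
    rewrite ltnS leq_eqVlt => /orP[/eqP -> | k_lt]; first by rewrite padded_gt.
    by rewrite (padded_S u (Ordinal k_lt)) mxE.
  have uT0 : u *m tridiag n c = 0.
    apply/rowP=> j; have j_lt := ltn_ord j.
    by rewrite mul_tridiag mxE !u_padded ?lucasU_SS; [ring | lia..].
  move: (u_padded 1%N isT); rewrite (ker0 _ uT0) padded0 => /esym/eqP.
  by rewrite oner_eq0.
have rec j : (j < n)%N -> padded u j.+2 = - c * padded u j.+1 - padded u j.
  move=> j_lt; have := congr1 (fun v : 'rV_n => v 0 (Ordinal j_lt)) uT0.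
  by rewrite mul_tridiag mxE /= => uT0_j; rewrite -[LHS]subr0 -uT0_j; ring.
have u_sol := lucas_recurrence_sol (padded_0 u) rec.
have u1_0 : padded u 1 = 0.
  apply/eqP; have := u_sol n.+1 (leqnn _); rewrite padded_gt // => /esym/eqP.
  by rewrite mulf_eq0 (negbTE U_neq0) orbF.
by apply/rowP=> i; rewrite mxE -padded_S u_sol ?u1_0 ?mul0r // ltnS ltnW.
Qed.

End Tridiagonal.

Section SystematicLCD.
Variable F : fieldType.

Lemma in_dualP (k m : nat) (G : 'M[F]_(k, m)) (x : 'rV_m) : in_dual G x <-> x *m G^T = 0.
Proof.
split=> [x_dual | xGT0 y /submxP[v ->]]; last by rewrite trmx_mul mulmxA xGT0 mul0mx.
apply/rowP=> j; move/(congr1 (fun M : 'M_1 => M 0 0)): (x_dual _ (row_sub j G)).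
rewrite !mxE => xGj0; rewrite -[RHS]xGj0.
by apply: eq_bigr => i _; rewrite !mxE.
Qed.

Lemma LCD_systematic (k m : nat) (T : 'M[F]_(k, m)) :
  is_LCD (row_mx 1%:M T) <-> (1%:M + T *m T^T) \in unitmx.
Proof.
have GGT : row_mx 1%:M T *m (row_mx 1%:M T)^T = 1%:M + T *m T^T.
  by rewrite tr_row_mx mul_row_col trmx1 mulmx1.
rewrite unitmx_kernel -GGT; split=> [LCD u uGGT0 | ker0 x /submxP[u ->] /in_dualP].
  have /eqP : u *m row_mx 1%:M T = 0.
    by apply: LCD; [apply/submxP; exists u | apply/in_dualP; rewrite -mulmxA].
  by rewrite mul_mx_row mulmx1 row_mx_eq0 => /andP[/eqP].
by rewrite -mulmxA => /ker0 ->; rewrite mul0mx.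
Qed.

End SystematicLCD.

Lemma mx_pchar2_sqr (R : comNzRingType) (n : nat) (A : 'M[R]_n) :
  2 \in [pchar R] -> 1%:M + A *m A = (1%:M + A) *m (1%:M + A).
Proof.
move=> charR; have AA0 : A + A = 0 by apply/matrixP=> i j; rewrite !mxE addrr_pchar2.
by rewrite mulmxDl !mulmxDr !mul1mx mulmx1 addrA -(addrA 1%:M) AA0 addr0.
Qed.

Lemma tridiag_tr (R : nzRingType) (n : nat) (a : R) : (tridiag n a)^T = tridiag n a.
Proof. by apply/matrixP=> i j; rewrite !mxE eq_sym orbC. Qed.

Lemma scalar_add_tridiag (R : nzRingType) (n : nat) (c a : R) :
  c%:M + tridiag n a = tridiag n (c + a).
Proof. by apply/matrixP=> i j; rewrite !mxE; case: eqP; rewrite ?add0r. Qed.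

Theorem theorem2p3 (F : finFieldType) (m : nat) (a : F) (n : nat)
    (L : fieldType) (f : {rmorphism F -> L}) (theta : L) :
  #|F| = (2 ^ m)%N ->
  (1 <= n)%N ->
  coprime n.+1 #|F| ->
  (n.+1).-primitive_root theta ->
  ~~ odd n /\
  (is_LCD (gen_Cn n a) <->
   ~ (exists i : nat, [/\ (1 <= i)%N, (i <= n %/ 2)%N &
        f a = -1 + theta ^+ i + theta ^- i])).
Proof.
move=> cardF _ coprime_n prim.
have charF : 2 \in [pchar F] := card_finPcharP cardF (isT : prime 2).
have charL : 2 \in [pchar L] := rmorph_pchar f charF.
have m_gt0 : (0 < m)%N by move: (card_finNzRing_gt1 F); rewrite cardF; case: (m).
have n_even : ~~ odd n by move: coprime_n; rewrite cardF coprime_pexpr // coprimen2.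
split=> //.
have [k n_kk] : exists k, n = (k + k)%N.
  by exists n./2; rewrite addnn -[LHS]odd_double_half (negbTE n_even).
have -> : (n %/ 2)%N = k by rewrite n_kk addnn -muln2 mulnK.
subst n.
(* C_(2k)(a) is LCD iff U_(2k+1)(1 + a) <> 0 iff W_k(1 + f a) <> 0. *)
rewrite /gen_Cn LCD_systematic tridiag_tr mx_pchar2_sqr // unitmx_mul andbb.
rewrite scalar_add_tridiag tridiag_unitmx oppr_pchar2 // -(fmorph_eq0 f).
rewrite lucasU_rmorph lucasU_double oppr_pchar2 // mulf_eq0 orbb -/(lucasW _ k).
rewrite rmorphD rmorph1 -(rwP negP) -(rwP eqP) (lucasW_eq0 prim).
have shift i : 1 + f a = cos_root theta i <-> f a = -1 + theta ^+ i + theta ^- i.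
  by rewrite /cos_root -addrA; split=> [<- | ->]; rewrite ?addKr ?addNKr.
apply: not_iff_compat; split=> -[i [i_gt0 i_le /shift fa]]; exists i; split=> //.
Qed.
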